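(* Let $a \ge 2$ be even and $b \ge 2$ be an integer such that $a \equiv 2 \pmod 4$ or $b$ is even. Then $R_\mathrm{cyc}(M_a^\mathrm{nest}, S_b) \ge a + b - 2$, where $S_b$ is any star graph of order $b$.
   Context: All graphs are finite, simple and undirected, and a graph of order $n$ has vertex set $\{0,1,\ldots,n-1\}$; $K_n$ is the complete graph on $\{0,\ldots,n-1\}$. A $2$-edge-coloring of $K_n$ assigns each edge a color in $\{1,2\}$. For a graph $H$ and such a coloring, an embedding of $H$ in color $j$ is an injective map $\varphi\colon V(H)\to V(K_n)$ such that for every edge $uv$ of $H$ the edge $\{\varphi(u),\varphi(v)\}$ has color $j$; it is increasing up to a cyclic permutation if there exists $t\in V(H)$ such that $(\varphi(t),\ldots,\varphi(|H|-1),\varphi(0),\ldots,\varphi(t-1))$ is increasing. The cyclic Ramsey number $R_\mathrm{cyc}(H_1,H_2)$ is the smallest $n$ such that every $2$-edge-coloring of $K_n$ admits an embedding of $H_1$ in color $1$ or of $H_2$ in color $2$ that is increasing up to a cyclic permutation. For even $n\ge2$, the nested matching $M_n^\mathrm{nest}$ is the graph of order $n$ whose edges are $\{v,n-1-v\}$ for $0\le v\le n/2-1$. A star graph of order $n$ is a graph on $\{0,\ldots,n-1\}$ in which one vertex (the center, arbitrary) is adjacent to all others and there are no other edges. *)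

From mathcomp Require Import all_boot.
Unset Printing Implicit Defensive.

(* A graph of order m: vertex set 'I_m = {0,...,m-1}, edges given by a
   relation (only used for symmetric irreflexive relations below). *)
Definition graph (m : nat) := rel 'I_m.

Definition nested_matching (m : nat) : graph m :=
  fun u v => (u + v == m.-1) && (u != v).

Definition star_graph (m : nat) (c : 'I_m) : graph m :=
  fun u v => ((u == c) && (v != c)) || ((v == c) && (u != c)).

Definition two_coloring (n : nat) (col : 'I_n -> 'I_n -> nat) : Prop :=
  forall i j : 'I_n, i != j -> col i j = col j i /\ (col i j = 1 \/ col i j = 2).

Definition embedding_in_color (m n : nat) (H : graph m) (col : 'I_n -> 'I_n -> nat)
  (j : nat) (phi : 'I_m -> 'I_n) : Prop :=
  injective phi /\ forall u v : 'I_m, H u v -> col (phi u) (phi v) = j.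

(* phi is increasing up to a cyclic permutation: for some t, the sequence
   phi t, ..., phi (m-1), phi 0, ..., phi (t-1) is (strictly) increasing.
   The position of i in that sequence is (i + m - t) mod m. *)
Definition cyc_increasing (m n : nat) (phi : 'I_m -> 'I_n) : Prop :=
  exists t : 'I_m, forall i k : 'I_m,
    (i + m - t) %% m < (k + m - t) %% m -> phi i < phi k.

Definition cyc_ramsey_prop (m1 m2 : nat) (H1 : graph m1) (H2 : graph m2) (n : nat) : Prop :=
  forall col : 'I_n -> 'I_n -> nat, two_coloring n col ->
    (exists phi : 'I_m1 -> 'I_n, embedding_in_color m1 n H1 col 1 phi /\ cyc_increasing _ n phi)
    \/ (exists phi : 'I_m2 -> 'I_n, embedding_in_color m2 n H2 col 2 phi /\ cyc_increasing _ n phi).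

From mathcomp Require Import all_boot zify.

(* Place N = a + b - 3 vertices on a circle and colour an edge 2 exactly when
   its endpoints are at circular distance at most k = floor(b/2) - 1 or are
   antipodal.  A vertex then has at most 2k + [N even] neighbours of colour 2,
   too few for the centre of S_b.  Rotating the circle so that the image of
   vertex 0 comes first turns a cyclically increasing copy of the nested
   matching into an increasing sequence g_0 < ... < g_{a-1}.  Its innermost
   pair {m-1, m} (a = 2m) has colour 1, so g_m - g_{m-1} > k, and so has its
   outermost pair {0, a-1}, so g_{a-1} - g_0 < N - k; together N >= a + 2k.
   When m is odd and N = a + 2k these bounds are tight, and the middle pair
   {(m-1)/2, a-1-(m-1)/2} is then antipodal, hence of colour 2. *)

Lemma cyc_ramsey_propW m1 m2 (H1 : graph m1) (H2 : graph m2) n N :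
  n <= N -> cyc_ramsey_prop m1 m2 H1 H2 n -> cyc_ramsey_prop m1 m2 H1 H2 N.
Proof.
move=> le_nN ramsey_n col col2.
pose w := widen_ord le_nN.
have w_inj : injective w by move=> i j /(congr1 val) ij; apply: val_inj.
have col2' : two_coloring n (fun i j => col (w i) (w j)).
  by move=> i j ij; apply: col2; rewrite (inj_eq w_inj).
have widen m (H : graph m) c (phi : 'I_m -> 'I_n) :
    embedding_in_color m n H (fun i j => col (w i) (w j)) c phi /\
    cyc_increasing m n phi ->
    embedding_in_color m N H col c (w \o phi) /\ cyc_increasing m N (w \o phi).
  move=> [[phi_inj phi_col] [t phi_cyc]]; split; last by exists t.
  by split=> // u v /w_inj /phi_inj.
by case: (ramsey_n _ col2') => -[phi /widen]; [left | right]; exists (w \o phi).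
Qed.

Lemma card_le_of_inj_ltn (T : finType) (A : {pred T}) (f : T -> nat) n :
  {in A &, injective f} -> {in A, forall x, f x < n} -> #|A| <= n.
Proof.
move=> f_inj f_lt; rewrite cardE -(size_map f) -[n](size_iota 0).
apply: uniq_leq_size => [|y /mapP[x]]; last by rewrite mem_enum mem_iota => /f_lt ? ->.
by rewrite map_inj_in_uniq ?enum_uniq // => x y; rewrite !mem_enum; apply: f_inj.
Qed.

Lemma increasing_gap n (g : nat -> nat) :
  (forall j, j.+1 < n -> g j < g j.+1) -> forall i j, i <= j < n -> g i + (j - i) <= g j.
Proof.
move=> g_inc i; elim=> [|j IHj] /andP[ij jn]; first by have -> : i = 0; lia.
case: (ltnP i j.+1) => [ij' | ji]; last by have -> : i = j.+1; lia.
by have := IHj ltac:(lia); have := g_inc j jn; lia.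
Qed.

(* The length of the arc from x forward to y on Z_N; [cyc_increasing] orders
   the vertices i of the source by [fwd m t i]. *)
Definition fwd (N x y : nat) : nat := (y + N - x) %% N.

Lemma fwdE N x y : x < N -> y < N -> fwd N x y = if x <= y then y - x else y + N - x.
Proof.
rewrite /fwd => xN yN; case: (leqP x y) => [xy | yx]; last by rewrite modn_small; lia.
by rewrite -addnBAC // modnDr modn_small //; lia.
Qed.

Lemma fwd_inj N x y y' : x < N -> y < N -> y' < N -> fwd N x y = fwd N x y' -> y = y'.
Proof. by move=> xN yN y'N; rewrite !fwdE //; case: (leqP x y); case: (leqP x y'); lia. Qed.

Lemma fwd_range N x y : x < N -> y < N -> x != y -> 0 < fwd N x y < N.
Proof. by move=> xN yN /eqP xy; rewrite fwdE //; case: (leqP x y); lia. Qed.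

Lemma fwd_sym N x y : x < N -> y < N -> x != y -> fwd N y x = N - fwd N x y.
Proof. by move=> xN yN /eqP xy; rewrite !fwdE //; case: (leqP x y); case: (leqP y x); lia. Qed.

Lemma fwd_sub N x y z : x < N -> y < N -> z < N ->
  fwd N z x <= fwd N z y -> fwd N x y = fwd N z y - fwd N z x.
Proof.
move=> xN yN zN; rewrite !fwdE //.
by case: (leqP x y); case: (leqP z x); case: (leqP z y); lia.
Qed.

Lemma cyc_increasing_fwd a N (phi : 'I_a -> 'I_N) : cyc_increasing a N phi ->
  forall u v w : 'I_a, u <= v < w -> fwd N (phi u) (phi v) < fwd N (phi u) (phi w).
Proof.
move=> [t phi_cyc] u v w /andP[uv vw].
have phi_pos (i k : 'I_a) : fwd a t i < fwd a t k -> phi i < phi k := phi_cyc i k.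
have ta := ltn_ord t; have wa := ltn_ord w; have uN := ltn_ord (phi u).
have := phi_pos u w; have := phi_pos w u.
move: uv; rewrite leq_eqVlt => /orP[/eqP/val_inj eq_uv | lt_uv].
  rewrite -eq_uv in vw *; rewrite !fwdE ?ltn_ord // leqnn subnn.
  by case: (leqP t u); case: (leqP t w); case: (leqP (phi u) (phi w)); lia.
have vN := ltn_ord (phi v).
have := phi_pos u v; have := phi_pos v u; have := phi_pos v w; have := phi_pos w v.
rewrite !fwdE ?ltn_ord //.
by case: (leqP t u); case: (leqP t v); case: (leqP t w);
  case: (leqP (phi u) (phi v)); case: (leqP (phi u) (phi w)); lia.
Qed.

Definition near (N k d : nat) : bool := [|| d <= k, N - d <= k | d.*2 == N].

Definition near_coloring (N k : nat) (x y : 'I_N) : nat :=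
  if near N k (fwd N x y) then 2 else 1.

Lemma near_sub N k d : d <= N -> near N k (N - d) = near N k d.
Proof.
move=> dN; rewrite /near subKn // orbCA; congr [|| _, _ | _].
by apply/eqP/eqP; lia.
Qed.

Lemma near_coloring_two N k : two_coloring N (near_coloring N k).
Proof.
move=> x y xy; rewrite /near_coloring; split; last by case: near; [right | left].
have yx : y != x by rewrite eq_sym.
have /andP[_ /ltnW fwdN] := fwd_range _ _ _ (ltn_ord y) (ltn_ord x) yx.
by rewrite fwd_sym ?ltn_ord // (near_sub _ _ _ fwdN).
Qed.

Lemma card_near_fwd N k (x : 'I_N) : k.*2 < N ->
  #|[set y : 'I_N | (y != x) && near N k (fwd N x y)]| <= k.*2 + ~~ odd N.
Proof.
move=> kN.
(* Sends the near distances 1..k and N-k..N-1 onto 0..2k-1, and N/2 to 2k. *)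
pose code d := if d <= k then d.-1 else if N - d <= k then k + (N - d).-1 else k.*2.
have code_inj d d' : 0 < d < N -> 0 < d' < N -> near N k d -> near N k d' ->
    code d = code d' -> d = d'.
  by rewrite /near /code; case: (leqP d k); case: (leqP d' k);
    case: (leqP (N - d) k); case: (leqP (N - d') k); lia.
have code_lt d : 0 < d < N -> near N k d -> code d < k.*2 + ~~ odd N.
  rewrite /near /code; case: (leqP d k) => [|dk]; first lia.
  case: (leqP (N - d) k) => [|Ndk]; first lia.
  by move=> _ /= /eqP <-; rewrite odd_double addn1.
have fwd_x_range (y : 'I_N) : y != x -> 0 < fwd N x y < N.
  by move=> yx; apply: fwd_range; rewrite ?ltn_ord // eq_sym.
apply: (@card_le_of_inj_ltn _ _ (fun y : 'I_N => code (fwd N x y))) => [y y' | y];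
  rewrite !inE.
  move=> /andP[yx near_y] /andP[y'x near_y'] eq_code; apply: val_inj.
  apply: (fwd_inj _ _ _ _ (ltn_ord x) (ltn_ord y) (ltn_ord y')).
  exact: code_inj (fwd_x_range y yx) (fwd_x_range y' y'x) near_y near_y' eq_code.
by move=> /andP[/fwd_x_range/code_lt].
Qed.

Lemma star_near_bound b N k (c : 'I_b) (phi : 'I_b -> 'I_N) :
  embedding_in_color b N (star_graph b c) (near_coloring N k) 2 phi ->
  k.*2 < N -> b.-1 <= k.*2 + ~~ odd N.
Proof.
move=> [phi_inj phi_col] kN; apply: leq_trans (card_near_fwd _ _ (phi c) kN).
rewrite -[b in b.-1]card_ord -(cardC1 c) -(card_imset (predC1 c) phi_inj).
apply/subset_leq_card/subsetP => _ /imsetP[v /[!inE] vc ->].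
rewrite (inj_eq phi_inj) vc /=.
have := phi_col c v; rewrite /star_graph eqxx vc /near_coloring => /(_ isT).
by case: near.
Qed.

Lemma nested_gaps_bound m N k (g : nat -> nat) : 0 < m ->
  (forall j, j.+1 < m.*2 -> g j < g j.+1) ->
  (forall u, u < m -> ~~ near N k (g (m.*2.-1 - u) - g u)) ->
  m.*2 + k.*2 + odd m <= N.
Proof.
move=> m_gt0 g_inc g_far.
have gap := increasing_gap _ _ g_inc.
have far u : u < m -> [/\ g u + k < g (m.*2.-1 - u), g (m.*2.-1 - u) + k < N + g u
    & (g (m.*2.-1 - u)).*2 != N + (g u).*2].
  move=> u_lt; have := gap u (m.*2.-1 - u) ltac:(lia).
  move/g_far: u_lt; rewrite /near !negb_or -!ltnNge => /and3P[far_l far_r /eqP not_half].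
  by split; [lia | lia | apply/eqP; lia].
have [inner _ _] := far m.-1 ltac:(lia).
have [_ outer _] := far 0 m_gt0.
rewrite (_ : m.*2.-1 - m.-1 = m) in inner; last by lia.
rewrite subn0 in outer.
have := gap 0 m.-1 ltac:(lia); have := gap m m.*2.-1 ltac:(lia).
have [m_odd | _] := boolP (odd m); last by lia.
have [i m_eq] : exists i, m = i.*2.+1 by exists m./2; rewrite -[LHS]odd_double_half m_odd.
have [_ _ /eqP not_half] := far i ltac:(lia).
rewrite (_ : m.*2.-1 - i = m + i) in not_half; last by lia.
have := gap 0 i ltac:(lia); have := gap i m.-1 ltac:(lia);
have := gap m (m + i) ltac:(lia); have := gap (m + i) m.*2.-1 ltac:(lia).
by move: inner outer not_half; rewrite m_eq; lia.
Qed.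

Lemma nested_matching_near_bound a N k (phi : 'I_a -> 'I_N) : 0 < a -> ~~ odd a ->
  embedding_in_color a N (nested_matching a) (near_coloring N k) 1 phi ->
  cyc_increasing a N phi -> a + k.*2 + odd a./2 <= N.
Proof.
move=> a_gt0 a_even [_ phi_col] /cyc_increasing_fwd phi_cyc.
have a_eq : a = a./2.*2 by rewrite -[LHS]odd_double_half (negbTE a_even).
pose z := Ordinal a_gt0; have z0 : z = 0 :> nat by [].
pose v j : 'I_a := insubd z j.
have vE j : j < a -> v j = j :> nat by move=> ja; rewrite /v insubdK.
rewrite {1}a_eq; apply: (nested_gaps_bound _ _ _ (fun j => fwd N (phi z) (phi (v j))));
  rewrite -?a_eq; first lia.
  by move=> j ja; apply: phi_cyc; rewrite z0 !vE; lia.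
move=> u u_lt; have uv_lt : u < a.-1 - u by lia.
have matched : nested_matching a (v u) (v (a.-1 - u)).
  by rewrite /nested_matching -(inj_eq val_inj) /= !vE; lia.
have g_le : fwd N (phi z) (phi (v u)) <= fwd N (phi z) (phi (v (a.-1 - u))).
  by apply/ltnW/phi_cyc; rewrite z0 !vE; lia.
move: (phi_col _ _ matched).
by rewrite /near_coloring (fwd_sub _ _ _ (phi z)) ?ltn_ord //; case: ifP.
Qed.

Theorem proposition4p35 (a b : nat) (c : 'I_b) :
  2 <= a -> ~~ odd a -> 2 <= b -> (a %% 4 = 2 \/ ~~ odd b) ->
  forall n : nat, cyc_ramsey_prop a b (nested_matching a) (star_graph b c) n ->
    a + b - 2 <= n.
Proof.
move=> a_ge2 a_even b_ge2 a_mod4_or_b_even n ramsey_n; rewrite leqNgt; apply/negP => n_lt.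
have ramsey_N := cyc_ramsey_propW _ _ _ _ n (a + b - 3) ltac:(lia) ramsey_n.
have b_eq := odd_double_half b.
have half_a_odd : odd b <= odd a./2.
  case: a_mod4_or_b_even => [a_mod4 | /negPf-> //].
  have -> : a./2 = (a %/ 4).*2.+1 by rewrite -divn2; lia.
  by rewrite /= odd_double leq_b1.
have N_parity : odd (a + b - 3) = ~~ odd b.
  by rewrite oddB ?oddD ?(negbTE a_even) ?addbT //; lia.
case: (ramsey_N _ (near_coloring_two _ (b./2 - 1))) => -[phi [phi_emb phi_cyc]].
  by have := nested_matching_near_bound _ _ _ _ (ltnW a_ge2) a_even phi_emb phi_cyc; lia.
by have := star_near_bound _ _ _ _ _ phi_emb; rewrite N_parity negbK; lia.
Qed.
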